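(* Let $1\le k\le n$ be integers and $f:\mathbb{F}_2^n\to\mathbb{F}_2$ a Boolean function. Then \[\mathrm{dt}_k(f)=\mathrm{add}_k(f)\prod_{i=n-k+1}^{n}\Big(1-\frac{1}{2^i}\Big).\] Equivalently, $\mathrm{add}_k(f)$ equals the proportion, among all tuples $(u_0,u_1,\dots,u_k)\in(\mathbb{F}_2^n)^{k+1}$ with $u_1,\dots,u_k$ linearly independent, of those for which $\bigoplus_{c_1,\dots,c_k\in\mathbb{F}_2} f\big((\bigoplus_{i=1}^k c_iu_i)\oplus u_0\big)\neq 0$.
   Context: $\oplus$ denotes addition in $\mathbb{F}_2$ and $\mathbb{F}_2^n$. Every Boolean function $f:\mathbb{F}_2^n\to\mathbb{F}_2$ has a unique algebraic normal form (ANF): a polynomial over $\mathbb{F}_2$ in $x_1,\dots,x_n$ of degree at most one in each variable whose polynomial function is $f$. For $1\le k\le n$, define \[\mathrm{dt}_k(f)=\frac{\big|\{(u_0,\dots,u_k)\in(\mathbb{F}_2^n)^{k+1}:\ \bigoplus_{c_1,\dots,c_k\in\mathbb{F}_2} f\big((\bigoplus_{i=1}^k c_iu_i)\oplus u_0\big)\neq0\}\big|}{2^{(k+1)n}}.\] For $M\in GL(n,\mathbb{F}_2)$, $v\in\mathbb{F}_2^n$, let $\varphi_{M,v}(x)=Mx\oplus v$. The degree-$k$ monomial density $\mathrm{dd}_k(f)$ is the number of monomials of degree $k$ having nonzero coefficient in the ANF of $f$ divided by $\binom{n}{k}$. The average degree-$k$ monomial density is \[\mathrm{add}_k(f)=\frac{\sum_{M\in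 GL(n,\mathbb{F}_2),\,v\in\mathbb{F}_2^n}\mathrm{dd}_k(f\circ\varphi_{M,v})}{2^n(2^n-1)(2^n-2)\cdots(2^n-2^{n-1})}.\] *)

From HB Require Import structures.
From mathcomp Require Import all_boot all_order all_algebra all_fingroup.
Set Implicit Arguments. Unset Strict Implicit. Unset Printing Implicit Defensive.
Import GRing.Theory.
Local Open Scope ring_scope.

Notation vec n := 'cV['F_2]_n.

(* Polynomial function on F_2^n of a polynomial of degree <= 1 in each
   variable, given by its coefficient function a : subsets S of variables
   (monomial prod_{i in S} x_i) -> F_2. *)
Definition anf_eval n (a : {ffun {set 'I_n} -> 'F_2}) (x : vec n) : 'F_2 :=
  \sum_(S : {set 'I_n}) a S * \prod_(i in S) x i 0.

Definition anf n (f : vec n -> 'F_2) : {ffun {set 'I_n} -> 'F_2} :=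
  odflt [ffun _ => 0]
    [pick a : {ffun {set 'I_n} -> 'F_2} | [forall x, anf_eval a x == f x]].

Definition dd_k n (k : nat) (f : vec n -> 'F_2) : rat :=
  #|[set S : {set 'I_n} | (#|S| == k) && (anf f S != 0)]|%:R / ('C(n, k))%:R.

Definition phi n (M : 'M['F_2]_n) (v : vec n) (x : vec n) : vec n := M *m x + v.

Definition add_k n (k : nat) (f : vec n -> 'F_2) : rat :=
  (\sum_(M : 'M['F_2]_n | M \in unitmx) \sum_(v : vec n) dd_k k (f \o phi M v))
  / ((2 ^ n)%:R * \prod_(i < n) ((2 ^ n)%:R - (2 ^ i)%:R)).

(* k-th order derivative of f at u_0 in directions u_1..u_k, for
   u : 'I_(k+1) -> F_2^n (u ord0 = u_0, u (lift ord0 i) = u_(i+1)). *)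
Definition kderiv n k (f : vec n -> 'F_2) (u : {ffun 'I_k.+1 -> vec n}) : 'F_2 :=
  \sum_(c : {ffun 'I_k -> 'F_2})
     f ((\sum_(i < k) c i *: u (lift ord0 i)) + u ord0).

Definition dt_k n (k : nat) (f : vec n -> 'F_2) : rat :=
  #|[set u : {ffun 'I_k.+1 -> vec n} | kderiv f u != 0]|%:R
  / (2 ^ (k.+1 * n))%:R.

Definition dirs_free n k (u : {ffun 'I_k.+1 -> vec n}) : bool :=
  row_free (\matrix_(i < k) (u (lift ord0 i))^T).

From mathcomp Require Import all_boot all_order all_algebra all_fingroup.
From mathcomp Require Import ring.
Set Implicit Arguments. Unset Strict Implicit. Unset Printing Implicit Defensive.
Import GRing.Theory Num.Theory.
Local Open Scope ring_scope.

(* Write free for the (k+1)-tuples (u_0; u_1, ..., u_k) of vectors of F_2^n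
   whose directions u_1, ..., u_k are linearly independent.  The proof rests
   on three facts.
   1. (Mobius inversion) The ANF coefficient of f o phi_(M,v) at the monomial
      x_(s 1) ... x_(s k) is the k-th derivative of f at v in the directions
      given by the columns s 1, ..., s k of M.
   2. (Uniformity) GL_n(F_2) acts transitively on free tuples, so the map
      (M, v) |-> (v; M e_(s 1), ..., M e_(s k)) hits every free tuple equally
      often; averaging over (M, v) is averaging over free tuples.
   3. (Vanishing) A derivative along dependent directions is zero.
   Facts 1 and 2 give add_k f = #{free u | D_u f != 0} / #free, fact 3 gives
   dt_k f = #{free u | D_u f != 0} / 2^((k+1)n), and counting free tuples
   (#free = 2^n prod_(i<k) (2^n - 2^i)) links the two. *)

Section RowFree.

Variable F : fieldType.

Lemma row_free_col_mx m n (v : 'rV[F]_n) (A : 'M[F]_(m, n)) :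
  row_free (col_mx v A) = row_free A && ~~ (v <= A)%MS.
Proof.
rewrite /row_free -addsmxE.
have [vA | v_notin_A] := boolP (v <= A)%MS.
  by rewrite (addsmx_idPr vA) andbF add1n ltn_eqF // ltnS rank_leq_row.
have rank_v_le1 : (\rank v <= 1)%N by apply: rank_leq_row.
have lt_A : (\rank A < \rank (v + A))%N.
  by apply: rank_ltmx; rewrite ltmxE addsmxSr /= addsmx_sub submx_refl andbT.
have le_A : (\rank (v + A) <= (\rank A).+1)%N.
  by rewrite (leq_trans (mxrank_adds_leqif v A)) // -[X in (_ <= X)%N]add1n leq_add2r.
by rewrite andbT (@anti_leq (\rank (v + A)%MS) (\rank A).+1) ?le_A.
Qed.

Lemma row_free_pid_mx k n (A : 'M[F]_(k, n)) : (k <= n)%N -> row_free A ->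
  exists2 R : 'M[F]_n, R \in unitmx & A = pid_mx k *m R.
Proof.
move=> le_kn /eqP rankA; set L := col_ebase A.
pose P : 'M[F]_(k, n) := pid_mx k; pose Q : 'M[F]_(n, k) := pid_mx k.
pose C : 'M[F]_n := copid_mx k.
have PQ : P *m Q = 1%:M by rewrite pid_mx_id // pid_mx_1.
have QP : Q *m P = pid_mx k by rewrite pid_mx_id.
have PC : P *m C = 0 by rewrite mul_pid_mx_copid.
have CQ : C *m Q = 0 by rewrite mul_copid_mx_pid.
have CC : C *m C = C by rewrite copid_mx_id.
(* X acts as L on the first k coordinates and as the identity elsewhere. *)
pose X := Q *m L *m P + C; pose Y := Q *m invmx L *m P + C.
have XY : X *m Y = 1%:M.
  have QPC : Q *m P + C = 1%:M by rewrite QP /C addrC subrK.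
  clearbody P Q C; rewrite /X /Y mulmxDl !mulmxDr !mulmxA -(mulmxA _ P Q) PQ.
  rewrite mulmx1 -(mulmxA Q) mulmxV ?col_ebase_unit // mulmx1 -(mulmxA _ P C).
  by rewrite PC mulmx0 CQ !mul0mx addr0 add0r CC.
exists (X *m row_ebase A).
  by rewrite unitmx_mul row_ebase_unit andbT; case/mulmx1_unit: XY.
rewrite -{1}(mulmx_ebase A) rankA -/L mulmxA /X mulmxDr PC addr0.
by rewrite !mulmxA PQ mul1mx.
Qed.

Lemma row_free_transitive k n (A B : 'M[F]_(k, n)) : (k <= n)%N ->
  row_free A -> row_free B -> exists2 R : 'M[F]_n, R \in unitmx & A *m R = B.
Proof.
move=> le_kn freeA freeB.
have [RA unitRA ->] := row_free_pid_mx le_kn freeA.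
have [RB unitRB ->] := row_free_pid_mx le_kn freeB.
exists (invmx RA *m RB); first by rewrite unitmx_mul unitmx_inv unitRA.
by rewrite -mulmxA (mulmxA RA) mulmxV // mul1mx.
Qed.

End RowFree.

Section CountRowFree.

Variable F : finFieldType.

Lemma card_row_space m n (A : 'M[F]_(m, n)) :
  row_free A -> #|[set v : 'rV[F]_n | (v <= A)%MS]| = (#|F| ^ m)%N.
Proof.
move=> freeA; have [B AB1] := row_freeP freeA.
have -> : [set v : 'rV[F]_n | (v <= A)%MS] = [set w *m A | w : 'rV[F]_m].
  by apply/setP => v; rewrite inE; apply/submxP/imsetP => [[w ->]|[w _ ->]]; exists w.
rewrite card_imset ?card_mx ?mul1n //.
by apply: (can_inj (g := mulmx^~ B)) => w; rewrite -mulmxA AB1 mulmx1.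
Qed.

(* The number of row-free m x n matrices: the i-th row must avoid the
   #|F|^i vectors spanned by the previous ones. *)
Lemma card_row_free m n : (m <= n)%N ->
  #|[set A : 'M[F]_(m, n) | row_free A]| = (\prod_(i < m) (#|F| ^ n - #|F| ^ i))%N.
Proof.
elim: m => [_|m IHm lt_mn].
  rewrite big_ord0 (@eq_card1 _ (0 : 'M_(0, n))) // => A.
  by rewrite !inE flatmx0 eqxx /row_free mxrank.unlock.
pose extend (p : 'rV[F]_n * 'M[F]_(m, n)) : 'M[F]_(1 + m, n) := col_mx p.1 p.2.
have extend_inj : injective extend.
  by move=> [v A] [w B] /eq_col_mx [/= -> ->].
have -> : [set A : 'M[F]_(1 + m, n) | row_free A] =
    extend @: [set p | row_free p.2 && ~~ (p.1 <= p.2)%MS].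
  apply/setP => A; rewrite inE -[A]vsubmxK.
  rewrite -[col_mx _ _]/(extend (usubmx A, dsubmx A)) mem_imset // inE /=.
  by rewrite row_free_col_mx andbC.
rewrite card_imset //; transitivity (\sum_(v : 'rV[F]_n) \sum_(A : 'M[F]_(m, n))
   ((row_free A && ~~ (v <= A)%MS) : nat)).
  rewrite pair_bigA -sum1_card big_mkcond /=.
  by apply: eq_bigr => p _; rewrite inE; case: ifP.
rewrite exchange_big big_ord_recr /= -IHm ?(ltnW lt_mn) // -sum1_card big_distrl.
rewrite [RHS]big_mkcond /=; apply: eq_bigr => A _; rewrite inE.
have [freeA|_] := boolP (row_free A); last by rewrite big1.
have card_rV : #|{: 'rV[F]_n}| = (#|F| ^ n)%N by rewrite card_mx mul1n.
rewrite mul1n -(card_row_space freeA) -card_rV -(cardsC [set v | (v <= A)%MS]) addKn.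
by rewrite -sum1_card [RHS]big_mkcond /=; apply: eq_bigr => v _; rewrite !inE.
Qed.

End CountRowFree.

Lemma F2_natE (x : 'F_2) : x = (x != 0)%:R.
Proof. by case: x => [[|[|//]]] ?; apply/val_inj. Qed.

Lemma F2_char2 : 2%:R = 0 :> 'F_2.
Proof. exact/val_inj. Qed.

Lemma F2_exp2n m : (2 ^ m)%:R = (m == 0)%:R :> 'F_2.
Proof. by case: m => [|m] //; rewrite expnS natrM F2_char2 mul0r. Qed.

Section MobiusInversion.

Variable n : nat.

Definition set_vec (R : {set 'I_n}) : vec n := \col_i (i \in R)%:R.

Definition mobius (g : vec n -> 'F_2) (S : {set 'I_n}) : 'F_2 :=
  \sum_(R : {set 'I_n} | R \subset S) g (set_vec R).

Lemma monomial_set_vec (T R : {set 'I_n}) :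
  \prod_(i in T) set_vec R i 0 = (T \subset R)%:R.
Proof.
have [sub_TR | /subsetPn[i Ti notRi]] := boolP (T \subset R).
  by rewrite big1 // => i Ti; rewrite mxE (subsetP sub_TR i Ti).
by rewrite (bigD1 i) //= mxE (negPf notRi) mul0r.
Qed.

Lemma interval_parity (T S : {set 'I_n}) :
  \sum_(R : {set 'I_n} | R \subset S) ((T \subset R)%:R : 'F_2) = (T == S)%:R.
Proof.
pose I := [set R : {set 'I_n} | (R \subset S) && (T \subset R)].
have -> : \sum_(R : {set 'I_n} | R \subset S) ((T \subset R)%:R : 'F_2) = #|I|%:R.
  rewrite -sum1_card natr_sum big_mkcond [RHS]big_mkcond /=.
  by apply: eq_bigr => R _; rewrite inE; case: (R \subset S); case: (T \subset R).
have [sub_TS | not_sub_TS] := boolP (T \subset S); last first.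
  rewrite (_ : I = set0) ?cards0; last first.
    apply/setP => R; rewrite !inE; apply: contraNF not_sub_TS => /andP[RS TR].
    exact: subset_trans TR RS.
  by case: eqP not_sub_TS => // ->; rewrite subxx.
(* R |-> R :\: T identifies [T, S] with the subsets of S :\: T. *)
have -> : I = (fun X => X :|: T) @: powerset (S :\: T).
  apply/setP => R; rewrite inE; apply/andP/imsetP => [[RS TR] | [X]].
    exists (R :\: T); first by rewrite inE setSD.
    by rewrite -{1}(setID R T) (setIidPr TR) setUC.
  by rewrite inE subsetD => /andP[XS _] ->; rewrite subUset XS sub_TS subsetUr.
rewrite card_in_imset ?card_powerset ?F2_exp2n.
  by rewrite cards_eq0 setD_eq0 eqEsubset sub_TS.
move=> X Y; rewrite !inE !subsetD => /andP[_ /setDidPl dX] /andP[_ /setDidPl dY].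
by move=> /(congr1 (fun Z => Z :\: T)); rewrite !setDUl setDv !setU0 dX dY.
Qed.

Lemma mobius_anf_eval (a : {ffun {set 'I_n} -> 'F_2}) S : mobius (anf_eval a) S = a S.
Proof.
rewrite /mobius /anf_eval.
under eq_bigr do under eq_bigr do rewrite monomial_set_vec.
rewrite exchange_big /=; under eq_bigr do rewrite -mulr_sumr interval_parity.
by rewrite (bigD1 S) //= eqxx mulr1 big1 ?addr0 // => T /negPf->; rewrite mulr0.
Qed.

(* Every Boolean function has an ANF: anf_eval is injective by Mobius
   inversion, hence bijective as both sides have 2^(2^n) elements. *)
Lemma anf_eval_onto (g : vec n -> 'F_2) : exists a, forall x, anf_eval a x = g x.
Proof.
pose eval a : {ffun vec n -> 'F_2} := [ffun x => anf_eval a x].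
have eval_inj : injective eval.
  move=> a b /ffunP eq_ab; apply/ffunP => S.
  rewrite -mobius_anf_eval -[b S]mobius_anf_eval.
  by apply: eq_bigr => R _; move: (eq_ab (set_vec R)); rewrite !ffunE.
have /codomP[a /ffunP eq_a] : [ffun x => g x] \in codom eval.
  apply: (inj_card_onto eval_inj); rewrite !card_ffun card_mx !card_ord muln1.
  by rewrite -(@cardsT {set 'I_n}) -powersetT card_powerset cardsT card_ord.
by exists a => x; move: (eq_a x); rewrite !ffunE.
Qed.

Lemma anfE (g : vec n -> 'F_2) S : anf g S = mobius g S.
Proof.
rewrite /anf; case: pickP => [a /forallP /= eval_a | no_anf] /=.
  by rewrite -mobius_anf_eval; apply: eq_bigr => R _; apply/eqP/eval_a.
have [a eval_a] := anf_eval_onto g.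
by move: (no_anf a) => /forallP[] x; rewrite eval_a.
Qed.

End MobiusInversion.

Section Derivatives.

Variables (n k : nat) (f : vec n -> 'F_2).

Definition frame (M : 'M['F_2]_n) (v : vec n) (s : 'I_k -> 'I_n) :
  {ffun 'I_k.+1 -> vec n} :=
  [ffun j => if unlift ord0 j is Some i then col (s i) M else v].

Lemma frame0 M v s : frame M v s ord0 = v.
Proof. by rewrite ffunE unlift_none. Qed.

Lemma frameS M v s i : frame M v s (lift ord0 i) = col (s i) M.
Proof. by rewrite ffunE liftK. Qed.

Lemma mobius_comp_phi M v (s : 'I_k -> 'I_n) : injective s ->
  mobius (f \o phi M v) [set s i | i : 'I_k] = kderiv f (frame M v s).
Proof.
move=> s_inj; rewrite /mobius /kderiv.
(* Subsets of s(I_k) correspond to 0/1 coefficient vectors c. *)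
pose supp (c : {ffun 'I_k -> 'F_2}) : {set 'I_n} := s @: [set i | c i != 0].
pose coef (R : {set 'I_n}) : {ffun 'I_k -> 'F_2} := [ffun i => (s i \in R)%:R].
rewrite (reindex supp) /=; last first.
  exists coef => [c _ | R]; last rewrite inE => sub_R.
    by apply/ffunP => i; rewrite ffunE (mem_imset _ _ s_inj) inE [RHS]F2_natE.
  apply/setP => x; apply/imsetP/idP => [[i]|Rx].
    by rewrite inE ffunE; case: (boolP (s i \in R)) => [? _ ->|_]; rewrite ?eqxx.
  have /imsetP[i _ xi] := subsetP sub_R x Rx.
  by exists i; rewrite // inE ffunE -xi Rx oner_eq0.
rewrite (eq_bigl predT) => [|c]; last first.
  by rewrite inE; apply/subsetP => _ /imsetP[i _ ->]; apply: imset_f.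
apply: eq_big => // c _; rewrite /= /phi frame0; congr (f (_ + _)).
apply/matrixP => a j; rewrite !mxE summxE.
transitivity (\sum_(l in supp c) M a l).
  rewrite [RHS]big_mkcond /=; apply: eq_bigr => l _; rewrite !mxE.
  by case: (l \in supp c); rewrite ?mulr1 ?mulr0.
rewrite big_imset /=; last by move=> x y _ _; apply: s_inj.
rewrite big_mkcond /=; apply: eq_bigr => i _; rewrite inE !mxE frameS !mxE.
by rewrite [c i in RHS]F2_natE; case: (c i != 0); rewrite ?mul1r ?mul0r.
Qed.

(* A derivative along linearly dependent directions vanishes: translating
   the coefficient vector c by a nonzero relation w pairs the terms. *)
Lemma kderiv_dependent (u : {ffun 'I_k.+1 -> vec n}) :
  ~~ dirs_free u -> kderiv f u = 0.
Proof.
rewrite /dirs_free -kermx_eq0 => /rowV0Pn[w /sub_kermxP rel_w w_neq0].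
have [i0 w_i0] : exists i0, w 0 i0 != 0.
  apply/existsP; apply: contraR w_neq0 => /existsPn w0; apply/eqP/rowP => i.
  by rewrite mxE; move: (w0 i); rewrite negbK => /eqP.
have sum_w : \sum_(i < k) w 0 i *: u (lift ord0 i) = 0.
  apply/matrixP => a b; rewrite summxE (ord1 b) mxE.
  move: (congr1 (fun m : 'rV_n => m 0 a) rel_w); rewrite !mxE => rel_wa.
  rewrite -[RHS]rel_wa.
  by apply: eq_bigr => i _; rewrite !mxE.
pose shift (c : {ffun 'I_k -> 'F_2}) : {ffun 'I_k -> 'F_2} := [ffun i => c i + w 0 i].
have shiftK : involutive shift.
  move=> c; apply/ffunP => i; rewrite !ffunE -addrA -mulr2n -mulr_natr.
  by rewrite F2_char2 mulr0 addr0.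
pose F c := f (\sum_(i < k) c i *: u (lift ord0 i) + u ord0).
have F_shift c : F (shift c) = F c.
  rewrite /F; congr (f (_ + _)); under eq_bigr do rewrite ffunE scalerDl.
  by rewrite big_split /= sum_w addr0.
rewrite /kderiv -/F (bigID (fun c : {ffun 'I_k -> 'F_2} => c i0 == 0)) /=.
rewrite [X in _ + X](reindex_inj (inv_inj shiftK)) /=.
have shifted : \sum_(c | shift c i0 != 0) F (shift c) =
    \sum_(c : {ffun 'I_k -> 'F_2} | c i0 == 0) F c.
  apply: eq_big => [c|c _]; last exact: F_shift.
  by rewrite ffunE [w 0 i0]F2_natE w_i0 [c i0]F2_natE; case: (c i0 != 0).
by rewrite shifted -mulr2n -mulr_natr F2_char2 mulr0.
Qed.

End Derivatives.

Section Frames.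

Variables (n k : nat).
Implicit Types (M : 'M['F_2]_n) (s : 'I_k -> 'I_n) (u : {ffun 'I_k.+1 -> vec n}).

Definition dirs_mx u : 'M['F_2]_(k, n) := \matrix_(i < k) (u (lift ord0 i))^T.

(* Distinct columns of an invertible matrix are linearly independent. *)
Lemma frame_free M v s : M \in unitmx -> injective s -> dirs_free (frame M v s).
Proof.
move=> unitM s_inj; rewrite /dirs_free -/(dirs_mx _).
have -> : dirs_mx (frame M v s) = rowsub s 1%:M *m M^T.
  by rewrite -rowsubE; apply/matrixP => i j; rewrite !mxE frameS !mxE.
rewrite /row_free mxrankMfree ?row_free_unit ?unitmx_tr //.
apply: inj_row_free => w /(congr1 (fun m : 'rV_n => m 0 (s _))) w0; apply/rowP => i.
move: (w0 i); rewrite !mxE (bigD1 i) //= big1 => [|l neq_li].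
  by rewrite !mxE eqxx mulr1 addr0.
by rewrite !mxE (inj_eq s_inj) (negPf neq_li) mulr0.
Qed.

Definition frame_count s u : nat :=
  \sum_(M : 'M['F_2]_n | M \in unitmx) [forall i, col (s i) M == u (lift ord0 i)].

Lemma frame_fiber M s u :
  (\sum_(v : vec n) (frame M v s == u) = [forall i, col (s i) M == u (lift ord0 i)])%N.
Proof.
rewrite (bigD1 (u ord0)) //= big1 => [|v neq_v]; last first.
  by apply/eqP; rewrite eqb0; apply: contra neq_v => /eqP <-; rewrite frame0.
rewrite addn0; congr nat_of_bool; apply/eqP/forallP => [<- i|cols_u].
  by rewrite frameS.
apply/ffunP => j; case: (unliftP ord0 j) => [i ->|->]; last by rewrite frame0.
by rewrite frameS (eqP (cols_u i)).
Qed.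

(* By transitivity of GL_n on free k-tuples, all free tuples of directions
   are realised by the same number of invertible matrices. *)
Lemma frame_count_const s u u' : (k <= n)%N ->
  dirs_free u -> dirs_free u' -> frame_count s u = frame_count s u'.
Proof.
move=> le_kn free_u free_u'.
have [R unitR uR] := row_free_transitive le_kn free_u' free_u.
have dirs_u i : u (lift ord0 i) = R^T *m u' (lift ord0 i).
  move: (congr1 (row i) uR); rewrite row_mul !rowK => row_i.
  by rewrite -[LHS]trmxK -row_i trmx_mul trmxK.
have unitRT : R^T \in unitmx by rewrite unitmx_tr.
rewrite /frame_count (reindex_inj (can_inj (mulKmx unitRT))) /=.
apply: eq_big => [M|M _]; first by rewrite unitmx_mul unitRT.
congr nat_of_bool; apply: eq_forallb => i.
rewrite [col _ (_ *m _)]colE -mulmxA -colE dirs_u.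
by apply/eqP/eqP => [/(can_inj (mulKmx unitRT))->|->].
Qed.

(* Counting through the map (M, v) |-> frame M v s: every free tuple has
   the same number of preimages. *)
Lemma frame_sum s (P : pred {ffun 'I_k.+1 -> vec n}) : (k <= n)%N -> injective s ->
  (\sum_(M : 'M['F_2]_n | M \in unitmx) \sum_(v : vec n) P (frame M v s) =
   #|[set u | dirs_free u && P u]| * frame_count s (frame 1%:M 0 s))%N.
Proof.
move=> le_kn s_inj.
transitivity (\sum_(M : 'M['F_2]_n | M \in unitmx) \sum_(v : vec n)
    \sum_(u | dirs_free u && P u) (frame M v s == u) : nat)%N.
  apply: eq_bigr => M unitM; apply: eq_bigr => v _.
  rewrite big_mkcond (bigD1 (frame M v s)) //= eqxx frame_free // big1 => [|u].
    by rewrite addn0; case: (P _).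
  by rewrite eq_sym => /negPf->; rewrite if_same.
under eq_bigr do rewrite exchange_big /=.
rewrite exchange_big /= -sum_nat_const; apply: eq_big => [u|u /andP[free_u _]].
  by rewrite inE.
rewrite -(frame_count_const s le_kn free_u (frame_free 0 (unitmx1 _ _) s_inj)).
by apply: eq_bigr => M _; rewrite frame_fiber.
Qed.

(* Hence (M, v) |-> frame M v s, with M invertible, is a uniform covering
   of the free tuples: any property P has the same proportion among the
   frames as among all free tuples. *)
Lemma frame_average s (P : pred {ffun 'I_k.+1 -> vec n}) : (k <= n)%N -> injective s ->
  ((\sum_(M : 'M['F_2]_n | M \in unitmx) \sum_(v : vec n) P (frame M v s)) *
     #|[set u : {ffun 'I_k.+1 -> vec n} | dirs_free u]| =
   #|[set u | dirs_free u && P u]| * (2 ^ n * #|[set M : 'M['F_2]_n | M \in unitmx]|))%N.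
Proof.
move=> le_kn s_inj; have := frame_sum predT le_kn s_inj.
rewrite (eq_card (B := [set u : {ffun 'I_k.+1 -> vec n} | dirs_free u])); last first.
  by move=> u; rewrite !inE andbT.
move=> all_frames.
rewrite frame_sum // -mulnA; congr (_ * _)%N; rewrite mulnC -{}all_frames.
rewrite -sum1_card big_distrr /=; apply: eq_big => [M|M _]; first by rewrite inE.
by rewrite sum_nat_const card_mx card_ord !muln1.
Qed.

End Frames.

Lemma card_GL_F2 n :
  #|[set M : 'M['F_2]_n | M \in unitmx]| = (\prod_(i < n) (2 ^ n - 2 ^ i))%N.
Proof.
have := @card_row_free 'F_2 n n (leqnn n); rewrite card_Fp // => <-.
by apply: eq_card => M; rewrite !inE row_free_unit.
Qed.

(* A tuple is a base point together with a row-free matrix of directions. *)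
Lemma card_dirs_free n k : (k <= n)%N ->
  #|[set u : {ffun 'I_k.+1 -> vec n} | dirs_free u]| =
  (2 ^ n * \prod_(i < k) (2 ^ n - 2 ^ i))%N.
Proof.
move=> le_kn.
pose pack (p : vec n * 'M['F_2]_(k, n)) : {ffun 'I_k.+1 -> vec n} :=
  [ffun j => if unlift ord0 j is Some i then (row i p.2)^T else p.1].
have pack0 p : pack p ord0 = p.1 by rewrite ffunE unlift_none.
have dirs_pack p : dirs_mx (pack p) = p.2.
  by apply/matrixP => i j; rewrite !mxE ffunE liftK !mxE.
have pack_inj : injective pack.
  move=> [v A] [w B] eq_p; congr pair; first by rewrite -[v](pack0 (v, A)) eq_p pack0.
  by rewrite -[A](dirs_pack (v, A)) eq_p dirs_pack.
have -> : [set u | dirs_free u] = pack @: setX [set: vec n] [set A | row_free A].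
  apply/setP => u; rewrite inE; apply/idP/imsetP => [free_u|[p]].
    exists (u ord0, dirs_mx u); first by rewrite !inE.
    apply/ffunP => j; rewrite ffunE; case: (unliftP ord0 j) => [i ->|->] //.
    by rewrite rowK trmxK.
  by rewrite !inE => /andP[_ free_p] ->; rewrite /dirs_free -/(dirs_mx _) dirs_pack.
rewrite card_imset // cardsX cardsT card_mx card_Fp // muln1.
have := card_row_free 'F_2 le_kn; rewrite card_Fp // => <-.
by congr (_ * _)%N; apply: eq_card => A; rewrite !inE.
Qed.

Lemma prod_pow_diff (R : numFieldType) (q n k : nat) : (0 < q)%N -> (k <= n)%N ->
  \prod_(i < k) ((q ^ n)%:R - (q ^ i)%:R) =
  (q ^ n)%:R ^+ k * \prod_(n - k + 1 <= i < n.+1) (1 - 1 / (q ^ i)%:R) :> R.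
Proof.
move=> q_gt0; elim: k => [_|k IHk lt_kn].
  by rewrite big_ord0 expr0 mul1r subn0 addn1 big_geq.
rewrite big_ord_recr /= IHk ?(ltnW lt_kn) // !addn1 subnSK //.
rewrite (@big_ltn _ _ _ (n - k)) ?ltnS ?leq_subr // exprS.
have q_pow_neq0 m : (q ^ m)%:R != 0 :> R by rewrite pnatr_eq0 -lt0n expn_gt0 q_gt0.
have -> : (q ^ n = q ^ k * q ^ (n - k))%N by rewrite -expnD (subnKC (ltnW lt_kn)).
rewrite natrM; move: (q_pow_neq0 k) (q_pow_neq0 (n - k)%N).
by set a := (q ^ k)%:R; set b := (q ^ (n - k))%:R => a_neq0 b_neq0; field.
Qed.

Definition subset_enum n k (d : 'I_n) (S : {set 'I_n}) (i : 'I_k) : 'I_n :=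
  nth d (enum S) i.

Lemma subset_enum_inj n k d (S : {set 'I_n}) :
  #|S| = k -> injective (@subset_enum n k d S).
Proof.
move=> card_S i j /eqP; rewrite /subset_enum nth_uniq ?enum_uniq -?cardE ?card_S //.
by move/eqP; apply: val_inj.
Qed.

Lemma subset_enum_image n k d (S : {set 'I_n}) : #|S| = k ->
  [set @subset_enum n k d S i | i : 'I_k] = S.
Proof.
move=> card_S; apply/setP => x; apply/imsetP/idP => [[i _ ->]|Sx].
  by rewrite /subset_enum -mem_enum mem_nth // -cardE card_S.
have idx_x : (index x (enum S) < k)%N by rewrite -card_S cardE index_mem mem_enum.
by exists (Ordinal idx_x); rewrite // /subset_enum nth_index // mem_enum.
Qed.

Section Densities.

Variables (n k : nat) (f : vec n -> 'F_2).
Hypotheses (le_kn : (k <= n)%N) (n_gt0 : (0 < n)%N).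

Local Notation free_tuples := [set u : {ffun 'I_k.+1 -> vec n} | dirs_free u].
Local Notation nonzero_free_tuples :=
  [set u : {ffun 'I_k.+1 -> vec n} | dirs_free u && (kderiv f u != 0)].

Lemma dt_k_free : dt_k k f = #|nonzero_free_tuples|%:R / (2 ^ (k.+1 * n))%:R.
Proof.
congr (_%:R / _); apply: eq_card => u; rewrite !inE.
by have [//|/(kderiv_dependent f)->] := boolP (dirs_free u); rewrite eqxx.
Qed.

Lemma free_tuples_density :
  #|free_tuples|%:R =
  (2 ^ (k.+1 * n))%:R * \prod_(n - k + 1 <= i < n.+1) (1 - 1 / (2 ^ i)%:R) :> rat.
Proof.
rewrite card_dirs_free // natrM natr_prod.
rewrite (eq_bigr (fun i : 'I_k => (2 ^ n)%:R - (2 ^ i)%:R)) => [|i _]; last first.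
  by rewrite natrB // leq_exp2l // ltnW // (leq_trans (ltn_ord i) le_kn).
by rewrite prod_pow_diff // mulrA -natrX -natrM -expnS -expnM mulnC.
Qed.

Lemma free_tuples_gt0 : (0 < #|free_tuples|)%N.
Proof.
rewrite card_dirs_free // muln_gt0 expn_gt0 /= prodn_gt0 // => i.
by rewrite subn_gt0 ltn_exp2l // (leq_trans (ltn_ord i) le_kn).
Qed.

Local Notation enum_S := (@subset_enum n k (Ordinal n_gt0)).
Local Notation GL := #|[set M : 'M['F_2]_n | M \in unitmx]|.

(* By Mobius inversion, the degree-k ANF coefficients of f o phi_(M,v) are
   the k-th derivatives of f along k columns of M. *)
Lemma dd_k_comp_phi M v : dd_k k (f \o phi M v) =
  (\sum_(S : {set 'I_n} | #|S| == k)
     ((kderiv f (frame M v (enum_S S)) != 0%R) : nat))%:R / ('C(n, k))%:R.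
Proof.
rewrite /dd_k -sum1_card big_mkcond [in RHS]big_mkcond /=; congr (_%:R / _).
apply: eq_bigr => S _; rewrite inE; have [/eqP card_S|] //= := boolP (#|S| == k).
rewrite anfE -{1}(subset_enum_image (Ordinal n_gt0) card_S) mobius_comp_phi //.
exact: subset_enum_inj.
Qed.

(* By uniformity of the frames, every k-set of columns yields the same
   number of pairs (M, v) with nonzero derivative. *)
Lemma frame_total (S : {set 'I_n}) : #|S| = k ->
  (\sum_(M : 'M['F_2]_n | M \in unitmx) \sum_(v : vec n)
     ((kderiv f (frame M v (enum_S S)) != 0%R) : nat))%:R =
  #|nonzero_free_tuples|%:R * (2 ^ n * GL)%:R / #|free_tuples|%:R :> rat.
Proof.
move=> card_S; have := frame_average (fun u => kderiv f u != 0) le_kn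
  (@subset_enum_inj n k (Ordinal n_gt0) S card_S).
move=> /= /(congr1 (fun m => m%:R : rat)); rewrite !natrM => <-.
by rewrite mulfK // pnatr_eq0 -lt0n free_tuples_gt0.
Qed.

Lemma sum_dd_k_comp_phi :
  \sum_(M : 'M['F_2]_n | M \in unitmx) \sum_(v : vec n) dd_k k (f \o phi M v) =
  #|nonzero_free_tuples|%:R * (2 ^ n * GL)%:R / #|free_tuples|%:R.
Proof.
under eq_bigr do under eq_bigr do rewrite dd_k_comp_phi.
under eq_bigr do rewrite -mulr_suml -natr_sum exchange_big /=.
rewrite -mulr_suml -natr_sum exchange_big /= natr_sum.
rewrite (eq_bigr _ (fun S card_S => frame_total (eqP card_S))).
rewrite (eq_bigl (fun S => S \in [set S : {set 'I_n} | #|S| == k])) => [|S]; last first.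
  by rewrite inE.
have binom_neq0 : ('C(n, k))%:R != 0 :> rat by rewrite pnatr_eq0 -lt0n bin_gt0.
by rewrite sumr_const card_draws card_ord -[_ *+ _]mulr_natr (mulfK binom_neq0).
Qed.

Lemma add_k_free : add_k k f = #|nonzero_free_tuples|%:R / #|free_tuples|%:R.
Proof.
have affine_card : (2 ^ n)%:R * \prod_(i < n) ((2 ^ n)%:R - (2 ^ i)%:R) =
    (2 ^ n * GL)%:R :> rat.
  rewrite natrM card_GL_F2 natr_prod; congr (_ * _); apply: eq_bigr => i _.
  by rewrite natrB // leq_exp2l // ltnW.
have affine_neq0 : (2 ^ n * GL)%:R != 0 :> rat.
  rewrite pnatr_eq0 muln_eq0 negb_or expn_eq0 /= -lt0n card_gt0.
  by apply/set0Pn; exists 1%:M; rewrite inE unitmx1.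
by rewrite /add_k affine_card sum_dd_k_comp_phi mulrAC (mulfK affine_neq0).
Qed.

End Densities.

Unset Implicit Arguments. Set Strict Implicit.

Theorem theorem1 (n k : nat) (hk1 : (1 <= k)%N) (hkn : (k <= n)%N)
    (f : 'cV['F_2]_n -> 'F_2) :
  dt_k k f = add_k k f * \prod_(n - k + 1 <= i < n.+1) (1 - 1 / (2 ^ i)%:R)
  /\
  add_k k f =
    #|[set u : {ffun 'I_k.+1 -> 'cV['F_2]_n} | dirs_free u && (kderiv f u != 0)]|%:R
    / #|[set u : {ffun 'I_k.+1 -> 'cV['F_2]_n} | dirs_free u]|%:R.
Proof.
have n_gt0 : (0 < n)%N := leq_trans hk1 hkn.
split; last exact: add_k_free.
have := free_tuples_gt0 hkn; rewrite -(ltr0n rat) free_tuples_density //.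
rewrite dt_k_free // add_k_free // free_tuples_density //.
set P := \prod_(_ <= i < _) _; set N := (2 ^ _)%:R.
have N_gt0 : 0 < N by rewrite ltr0n expn_gt0.
rewrite pmulr_rgt0 // => P_gt0.
by field; rewrite !lt0r_neq0.
Qed.
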